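(* Let $n\geqslant 18$, $k=\lceil\log_2 n\rceil$, $G=(V,E)$ the complete graph on $V=\{1,\ldots,n\}$, and for $i\in V$ let $\mathbf i\in\{0,1\}^k$ be the binary digits of $i-1$ (i.e. $i-1=\sum_{t=1}^k i_t2^{t-1}$). Let $b(\mathbf x)=\sum_{ij\in E}(-1)^{\langle\mathbf i,\mathbf j\rangle}x_ix_j$. Then for $\mathbf x=(1/2,\ldots,1/2)$, \[\operatorname{mcgap}[b](\mathbf x)\geqslant\frac{\sqrt n}{3}\operatorname{chgap}[b](\mathbf x).\]
   Context: $\langle\mathbf i,\mathbf j\rangle=\sum_t i_tj_t$. $B=\{(\mathbf x,z)\in[0,1]^n\times\mathbb R:z=b(\mathbf x)\}$. The McCormick polytopes are $P=\{(\mathbf x,\mathbf y)\in[0,1]^n\times[0,1]^{|E|}: y_{ij}\le x_i,\ y_{ij}\le x_j,\ y_{ij}\ge x_i+x_j-1\ \forall ij\in E\}$ and $Q=\{(\mathbf x,z)\in[0,1]^n\times\mathbb R:\exists\mathbf y\in[0,1]^{|E|}\text{ with }(\mathbf x,\mathbf y)\in P,\ z=\sum_{ij\in E}a_{ij}y_{ij}\}$ where $a_{ij}$ are the coefficients of $b$. $\operatorname{cav}[b](\mathbf x)=\max\{z:(\mathbf x,z)\in\operatorname{conv}(B)\}$, $\operatorname{vex}[b](\mathbf x)=\min\{z:(\mathbf x,z)\in\operatorname{conv}(B)\}$, $\operatorname{mcu}[b](\mathbf x)=\max\{z:(\mathbf x,z)\in Q\}$, $\operatorname{mcl}[b](\mathbf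 x)=\min\{z:(\mathbf x,z)\in Q\}$, $\operatorname{chgap}[b]=\operatorname{cav}[b]-\operatorname{vex}[b]$, $\operatorname{mcgap}[b]=\operatorname{mcu}[b]-\operatorname{mcl}[b]$. *)

From Stdlib Require Import Reals Lra Lia.
Open Scope R_scope.

Fixpoint fsum (N : nat) (f : nat -> R) : R :=
  match N with O => 0 | S N' => fsum N' f + f N' end.

(* Vertices are 0-based: vertex i in {1..n} of the paper is i-1 here, and
   bit t (0-based) of i-1 is the paper's i_{t+1}.  <i,j> over k bits: *)
Fixpoint inner (k i j : nat) : nat :=
  match k with
  | O => O
  | S t => (inner t i j + (if andb (Nat.testbit i t) (Nat.testbit j t) then 1 else 0))%nat
  end.

Definition kbits (n : nat) : nat := Nat.log2_up n.

Definition coef (n i j : nat) : R := (-1) ^ (inner (kbits n) i j).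

Definition bfun (n : nat) (x : nat -> R) : R :=
  fsum n (fun j => fsum j (fun i => coef n i j * x i * x j)).

Definition in_cube (n : nat) (x : nat -> R) : Prop :=
  forall i, (i < n)%nat -> 0 <= x i <= 1.

Definition in_convB (n : nat) (x : nat -> R) (z : R) : Prop :=
  exists (N : nat) (lam : nat -> R) (p : nat -> nat -> R),
    (forall m, (m < N)%nat -> 0 <= lam m) /\
    fsum N lam = 1 /\
    (forall m, (m < N)%nat -> in_cube n (p m)) /\
    (forall i, (i < n)%nat -> x i = fsum N (fun m => lam m * p m i)) /\
    z = fsum N (fun m => lam m * bfun n (p m)).

(* (x,y) in P, the McCormick polytope (y_ij stored as y i j, i < j < n). *)
Definition in_P (n : nat) (x : nat -> R) (y : nat -> nat -> R) : Prop :=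
  in_cube n x /\
  forall i j, (i < j)%nat -> (j < n)%nat ->
    0 <= y i j <= 1 /\ y i j <= x i /\ y i j <= x j /\ y i j >= x i + x j - 1.

Definition in_Q (n : nat) (x : nat -> R) (z : R) : Prop :=
  in_cube n x /\
  exists y : nat -> nat -> R, in_P n x y /\
    z = fsum n (fun j => fsum j (fun i => coef n i j * y i j)).

Definition half_pt : nat -> R := fun _ => / 2.

(* mcgap[b](x) >= c * chgap[b](x), where chgap = max{z1-z2 : (x,z1),(x,z2) in conv B}
   and mcgap = max{w1-w2 : (x,w1),(x,w2) in Q} (both maxima are attained),
   stated without choosing the maximisers: *)
Definition mcgap_ge_c_chgap (n : nat) (x : nat -> R) (c : R) : Prop :=
  forall z1 z2, in_convB n x z1 -> in_convB n x z2 ->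
    exists w1 w2, in_Q n x w1 /\ in_Q n x w2 /\ w1 - w2 >= c * (z1 - z2).

From Stdlib Require Import Reals Lra Lia.
Open Scope R_scope.

(* At x = 1/2 every point of conv(B) averages values b(p) with |p_i - 1/2| <= 1/2.  The
   linear part of b around 1/2 averages out, and the quadratic part is controlled by the
   spectral norm sqrt(2^k) <= sqrt(2n) of the Hadamard matrix (-1)^<i,j> of order 2^k,
   whose n x n corner holds the a_ij; hence chgap <= (sqrt(2^k) + 1) n / 4.  On the
   McCormick side y_ij = 1/2 on the edges with a_ij = 1 (resp. -1) and 0 elsewhere are
   feasible at x = 1/2, so mcgap >= n(n-1)/4, and sqrt(n) (sqrt(2n) + 1) <= 3(n-1)
   once n >= 18. *)

Lemma Rabs_le_bounds x a : Rabs x <= a -> - a <= x <= a.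
Proof.
split; [pose proof (Rle_abs (- x)); rewrite Rabs_Ropp in * | pose proof (Rle_abs x)]; lra.
Qed.

Lemma fsum_ext N f g : (forall i, (i < N)%nat -> f i = g i) -> fsum N f = fsum N g.
Proof.
induction N as [|N IH]; intros H; simpl; [reflexivity|].
rewrite IH by (intros; apply H; lia). rewrite H by lia. reflexivity.
Qed.

Lemma fsum_add N f g : fsum N (fun i => f i + g i) = fsum N f + fsum N g.
Proof. induction N as [|N IH]; simpl; [lra|rewrite IH; lra]. Qed.

Lemma fsum_sub N f g : fsum N (fun i => f i - g i) = fsum N f - fsum N g.
Proof. induction N as [|N IH]; simpl; [lra|rewrite IH; lra]. Qed.

Lemma fsum_scal N c f : fsum N (fun i => c * f i) = c * fsum N f.
Proof. induction N as [|N IH]; simpl; [lra|rewrite IH; lra]. Qed.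

Lemma fsum_scal_r N c f : fsum N (fun i => f i * c) = fsum N f * c.
Proof. rewrite Rmult_comm, <- fsum_scal. apply fsum_ext; intros; lra. Qed.

Lemma fsum_const N c : fsum N (fun _ => c) = INR N * c.
Proof. induction N as [|N IH]; simpl fsum; [simpl; lra|rewrite IH, S_INR; lra]. Qed.

Lemma fsum_eq0 N f : (forall i, (i < N)%nat -> f i = 0) -> fsum N f = 0.
Proof. intros H. rewrite (fsum_ext N f (fun _ => 0)), fsum_const by assumption. lra. Qed.

Lemma fsum_le N f g : (forall i, (i < N)%nat -> f i <= g i) -> fsum N f <= fsum N g.
Proof.
induction N as [|N IH]; intros H; simpl; [lra|].
apply Rplus_le_compat; [apply IH; intros; apply H; lia | apply H; lia].
Qed.

Lemma fsum_ge0 N f : (forall i, (i < N)%nat -> 0 <= f i) -> 0 <= fsum N f.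
Proof. intros H. rewrite <- (fsum_eq0 N (fun _ => 0)) by reflexivity. now apply fsum_le. Qed.

Lemma fsum_abs_le N f : Rabs (fsum N f) <= fsum N (fun i => Rabs (f i)).
Proof.
induction N as [|N IH]; simpl; [rewrite Rabs_R0; lra|].
pose proof (Rabs_triang (fsum N f) (f N)); lra.
Qed.

Lemma fsum_split N M f : fsum (N + M) f = fsum N f + fsum M (fun t => f (N + t)%nat).
Proof.
induction M as [|M IH]; simpl; [rewrite Nat.add_0_r; lra|].
rewrite Nat.add_succ_r; simpl; rewrite IH; lra.
Qed.

Lemma fsum_le_widen N M f : (N <= M)%nat -> (forall i, 0 <= f i) -> fsum N f <= fsum M f.
Proof.
intros HNM Hf. replace M with (N + (M - N))%nat by lia. rewrite fsum_split.
pose proof (fsum_ge0 (M - N) (fun t => f (N + t)%nat) (fun t _ => Hf _)); lra.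
Qed.

Lemma fsum_swap N M (f : nat -> nat -> R) :
  fsum N (fun a => fsum M (fun b => f a b)) = fsum M (fun b => fsum N (fun a => f a b)).
Proof.
induction N as [|N IH]; simpl.
- symmetry; now apply fsum_eq0.
- now rewrite IH, <- fsum_add.
Qed.

Lemma fsum_delta N i c : (i < N)%nat -> fsum N (fun j => if Nat.eqb i j then c else 0) = c.
Proof.
induction N as [|N IH]; intros Hi; [lia|simpl].
destruct (Nat.eqb_spec i N) as [->|Hne].
- rewrite fsum_eq0; [lra|]. intros j Hj. destruct (Nat.eqb_spec N j); [lia|reflexivity].
- rewrite IH by lia; lra.
Qed.

Lemma fsum_sqr N a : fsum N a ^ 2 = fsum N (fun i => fsum N (fun j => a i * a j)).
Proof. rewrite <- Rsqr_pow2; unfold Rsqr. rewrite <- fsum_scal_r. apply fsum_ext; intros. now rewrite <- fsum_scal. Qed.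

Lemma fsum_symmetric_square N f : (forall i j, f i j = f j i) ->
  fsum N (fun j => fsum N (fun i => f i j))
  = 2 * fsum N (fun j => fsum j (fun i => f i j)) + fsum N (fun i => f i i).
Proof.
intros Hsym. induction N as [|N IH]; simpl; [lra|].
rewrite fsum_add, IH, (fsum_ext N (f N) (fun j => f j N)) by auto. lra.
Qed.

Lemma fsum_id N : fsum N INR = INR N * (INR N - 1) / 2.
Proof. induction N as [|N IH]; simpl fsum; [simpl; lra|rewrite IH, S_INR; lra]. Qed.

Definition walsh (k i t : nat) : R := (-1) ^ inner k i t.

Lemma pow_m1_cases m : (-1) ^ m = 1 \/ (-1) ^ m = -1.
Proof. induction m as [|m IH]; simpl; [lra|destruct IH as [-> | ->]; lra]. Qed.

Lemma Rabs_walsh k i t : Rabs (walsh k i t) = 1.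
Proof.
unfold walsh; destruct (pow_m1_cases (inner k i t)) as [-> | ->];
[rewrite Rabs_right | rewrite Rabs_left]; lra.
Qed.

Lemma inner_sym k i j : inner k i j = inner k j i.
Proof. induction k as [|k IH]; simpl; [reflexivity|]. now rewrite IH, Bool.andb_comm. Qed.

Lemma walsh_sym k i j : walsh k i j = walsh k j i.
Proof. unfold walsh; now rewrite inner_sym. Qed.

Lemma inner_ext k i t t' : (forall s, (s < k)%nat -> Nat.testbit t s = Nat.testbit t' s) ->
  inner k i t = inner k i t'.
Proof.
induction k as [|k IH]; intros H; simpl; [reflexivity|].
rewrite IH by (intros; apply H; lia). rewrite H by lia. reflexivity.
Qed.

Lemma testbit_pow2_add_low k t s : (s < k)%nat -> Nat.testbit (2 ^ k + t) s = Nat.testbit t s.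
Proof.
intros Hs. rewrite <- (Nat.mod_pow2_bits_low _ k s Hs), <- (Nat.mod_pow2_bits_low t k s Hs).
f_equal. replace (2 ^ k + t)%nat with (t + 1 * 2 ^ k)%nat by lia. apply Nat.Div0.mod_add.
Qed.

Lemma testbit_pow2_add_top k t : (t < 2 ^ k)%nat -> Nat.testbit (2 ^ k + t) k = true.
Proof.
intros Ht. apply Nat.testbit_true. replace (2 ^ k + t)%nat with (t + 1 * 2 ^ k)%nat by lia.
rewrite Nat.div_add, Nat.div_small by (try apply Nat.pow_nonzero; lia). reflexivity.
Qed.

Lemma testbit_lt_pow2 k t : (t < 2 ^ k)%nat -> Nat.testbit t k = false.
Proof. intros Ht. rewrite <- (Nat.mod_small t _ Ht). apply Nat.mod_pow2_bits_high; lia. Qed.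

Definition sign_of (b : bool) : R := if b then -1 else 1.

Lemma walsh_S_low k i t : (t < 2 ^ k)%nat -> walsh (S k) i t = walsh k i t.
Proof.
intros Ht. unfold walsh; simpl inner.
now rewrite (testbit_lt_pow2 k t Ht), Bool.andb_false_r, Nat.add_0_r.
Qed.

Lemma walsh_S_high k i t : (t < 2 ^ k)%nat ->
  walsh (S k) i (2 ^ k + t) = walsh k i t * sign_of (Nat.testbit i k).
Proof.
intros Ht. unfold walsh; simpl inner.
rewrite testbit_pow2_add_top, Bool.andb_true_r, pow_add by assumption.
rewrite (inner_ext k i (2 ^ k + t) t) by (intros; now apply testbit_pow2_add_low).
destruct (Nat.testbit i k); simpl; lra.
Qed.

Fixpoint low_bits_eqb (k i j : nat) : bool :=
  match k with
  | O => true
  | S t => low_bits_eqb t i j && Bool.eqb (Nat.testbit i t) (Nat.testbit j t)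
  end.

Lemma low_bits_eqb_refl k i : low_bits_eqb k i i = true.
Proof. induction k as [|k IH]; simpl; [reflexivity|]. now rewrite IH, Bool.eqb_reflx. Qed.

Lemma low_bits_eqb_eq k i j :
  low_bits_eqb k i j = true -> (i < 2 ^ k)%nat -> (j < 2 ^ k)%nat -> i = j.
Proof.
intros Hij Hi Hj. apply Nat.bits_inj_iff. intros s.
destruct (Nat.lt_ge_cases s k) as [Hs|Hs].
- revert s Hs Hij; clear. induction k as [|k IH]; intros s Hs Hij; [lia|].
  simpl in Hij; apply andb_prop in Hij as [Hlow Htop].
  destruct (Nat.eq_dec s k) as [->|]; [now apply Bool.eqb_prop | apply IH; auto; lia].
- rewrite <- (Nat.mod_small i _ Hi), <- (Nat.mod_small j _ Hj).
  now rewrite !Nat.mod_pow2_bits_high.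
Qed.

Lemma walsh_orthogonal_low_bits k i j :
  fsum (2 ^ k) (fun t => walsh k i t * walsh k j t)
  = if low_bits_eqb k i j then INR (2 ^ k) else 0.
Proof.
induction k as [|k IH]; [unfold walsh; simpl; lra|].
replace (2 ^ S k)%nat with (2 ^ k + 2 ^ k)%nat by (simpl; lia).
rewrite fsum_split.
rewrite (fsum_ext _ _ (fun t => walsh k i t * walsh k j t))
  by (intros; now rewrite !walsh_S_low).
rewrite (fsum_ext _ (fun t => walsh (S k) i (2 ^ k + t) * walsh (S k) j (2 ^ k + t))
                   (fun t => sign_of (Nat.testbit i k) * sign_of (Nat.testbit j k)
                                * (walsh k i t * walsh k j t)))
  by (intros; rewrite !walsh_S_high by assumption; lra).
rewrite fsum_scal, IH, plus_INR; simpl low_bits_eqb.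
destruct (low_bits_eqb k i j); simpl; [|lra].
destruct (Nat.testbit i k), (Nat.testbit j k); simpl; lra.
Qed.

Lemma walsh_orthogonal k i j : (i < 2 ^ k)%nat -> (j < 2 ^ k)%nat ->
  fsum (2 ^ k) (fun t => walsh k i t * walsh k j t) = if Nat.eqb i j then INR (2 ^ k) else 0.
Proof.
intros Hi Hj. rewrite walsh_orthogonal_low_bits.
destruct (Nat.eqb_spec i j) as [->|Hne]; [now rewrite low_bits_eqb_refl|].
destruct (low_bits_eqb k i j) eqn:E; [|reflexivity].
now destruct (Hne (low_bits_eqb_eq k i j E Hi Hj)).
Qed.

Lemma walsh_parseval k n v : (n <= 2 ^ k)%nat ->
  fsum (2 ^ k) (fun t => fsum n (fun i => walsh k i t * v i) ^ 2)
  = INR (2 ^ k) * fsum n (fun i => v i ^ 2).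
Proof.
intros Hn.
rewrite (fsum_ext _ _ (fun t => fsum n (fun i => fsum n (fun j =>
           v i * v j * (walsh k i t * walsh k j t))))).
2: { intros t _. rewrite fsum_sqr.
     apply fsum_ext; intros; apply fsum_ext; intros; lra. }
rewrite fsum_swap, <- fsum_scal. apply fsum_ext; intros i Hi.
rewrite fsum_swap, <- (fsum_delta n i (INR (2 ^ k) * v i ^ 2)) by assumption.
apply fsum_ext; intros j Hj.
rewrite fsum_scal, walsh_orthogonal by lia.
destruct (Nat.eqb_spec i j) as [->|]; lra.
Qed.

Lemma walsh_form_abs_le k n v : (n <= 2 ^ k)%nat ->
  Rabs (fsum n (fun j => fsum n (fun i => walsh k i j * v i * v j)))
  <= sqrt (INR (2 ^ k)) * fsum n (fun i => v i ^ 2).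
Proof.
intros Hn.
set (s := sqrt (INR (2 ^ k))). set (S := fsum n (fun i => v i ^ 2)).
set (w := fun j => fsum n (fun i => walsh k i j * v i)).
assert (HF : fsum n (fun j => fsum n (fun i => walsh k i j * v i * v j))
             = fsum n (fun j => v j * w j)).
{ apply fsum_ext; intros j _; unfold w. rewrite <- fsum_scal.
  apply fsum_ext; intros; lra. }
assert (HK : 0 < INR (2 ^ k)) by (apply lt_0_INR, Nat.neq_0_lt_0, Nat.pow_nonzero; lia).
assert (Hs : 0 < s) by now apply sqrt_lt_R0.
assert (Hss : s * s = INR (2 ^ k)) by (apply sqrt_sqrt; lra).
assert (Hw : fsum n (fun j => w j ^ 2) <= s * s * S).
{ rewrite Hss; unfold S, w. rewrite <- walsh_parseval by assumption.
  apply fsum_le_widen; [assumption | intros; apply pow2_ge_0]. }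
(* AM-GM: [2 s |v_j w_j| <= s^2 v_j^2 + w_j^2]. *)
assert (Hamgm : 2 * s * fsum n (fun j => Rabs (v j * w j))
                <= s * s * S + fsum n (fun j => w j ^ 2)).
{ unfold S. rewrite <- !fsum_scal, <- fsum_add. apply fsum_le; intros j _.
  rewrite Rabs_mult. pose proof (pow2_ge_0 (s * Rabs (v j) - Rabs (w j))).
  rewrite <- (pow2_abs (v j)), <- (pow2_abs (w j)). nra. }
rewrite HF. eapply Rle_trans; [apply fsum_abs_le|].
apply (Rmult_le_reg_l (2 * s)); [lra|]. nra.
Qed.

Lemma bfun_abs_le n v : (n <= 2 ^ kbits n)%nat ->
  Rabs (bfun n v) <= (sqrt (INR (2 ^ kbits n)) + 1) / 2 * fsum n (fun i => v i ^ 2).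
Proof.
intros Hn. set (k := kbits n).
set (S := fsum n (fun i => v i ^ 2)).
pose proof (walsh_form_abs_le k n v Hn) as Hform; fold S in Hform.
rewrite (fsum_symmetric_square n (fun i j => walsh k i j * v i * v j)) in Hform
  by (intros; rewrite walsh_sym; ring).
assert (Hdiag : Rabs (fsum n (fun i => walsh k i i * v i * v i)) <= S).
{ eapply Rle_trans; [apply fsum_abs_le|]. apply fsum_le; intros i _.
  rewrite !Rabs_mult, Rabs_walsh, <- (pow2_abs (v i)). right; ring. }
change (bfun n v) with (fsum n (fun j => fsum j (fun i => walsh k i j * v i * v j))).
set (B := fsum n (fun j => fsum j (fun i => walsh k i j * v i * v j))) in *.
set (D := fsum n (fun i => walsh k i i * v i * v i)) in *.
(* [2 B + D] is the full symmetric form, [D] its diagonal. *)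
apply Rabs_le_bounds in Hform, Hdiag. apply Rabs_le. nra.
Qed.

Definition polar (n : nat) (c v : nat -> R) : R :=
  fsum n (fun j => fsum j (fun i => coef n i j * (c i * v j + v i * c j))).

Lemma bfun_ext n f g : (forall i, (i < n)%nat -> f i = g i) -> bfun n f = bfun n g.
Proof.
intros H. apply fsum_ext; intros j Hj. apply fsum_ext; intros i Hi.
rewrite !H by lia; reflexivity.
Qed.

Lemma bfun_shift n c v : bfun n (fun i => c i + v i) = bfun n c + polar n c v + bfun n v.
Proof.
unfold bfun, polar. rewrite <- !fsum_add. apply fsum_ext; intros j _.
rewrite <- !fsum_add. apply fsum_ext; intros i _. ring.
Qed.

Lemma fsum_polar_centered n c N lam v :
  (forall i, (i < n)%nat -> fsum N (fun m => lam m * v m i) = 0) ->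
  fsum N (fun m => lam m * polar n c (v m)) = 0.
Proof.
intros Hv. unfold polar.
rewrite (fsum_ext _ _ (fun m => fsum n (fun j => fsum j (fun i =>
           lam m * (coef n i j * (c i * v m j + v m i * c j))))))
  by (intros; rewrite <- fsum_scal; apply fsum_ext; intros; now rewrite <- fsum_scal).
rewrite fsum_swap. apply fsum_eq0; intros j Hj.
rewrite fsum_swap. apply fsum_eq0; intros i Hi.
rewrite (fsum_ext _ _ (fun m => coef n i j * c i * (lam m * v m j)
                                + coef n i j * c j * (lam m * v m i)))
  by (intros; ring).
rewrite fsum_add, !fsum_scal, !Hv by lia. ring.
Qed.

(* The linear part of [b] around the barycentre [x] averages out. *)
Lemma fsum_convex_bfun n N lam p x :
  fsum N lam = 1 ->
  (forall i, (i < n)%nat -> x i = fsum N (fun m => lam m * p m i)) ->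
  fsum N (fun m => lam m * bfun n (p m))
  = bfun n x + fsum N (fun m => lam m * bfun n (fun i => p m i - x i)).
Proof.
intros Hlam Hx.
rewrite (fsum_ext _ _ (fun m => lam m * bfun n x
                                + lam m * polar n x (fun i => p m i - x i)
                                + lam m * bfun n (fun i => p m i - x i))).
2: { intros m _. rewrite (bfun_ext n (p m) (fun i => x i + (p m i - x i))) by (intros; ring).
     rewrite bfun_shift. ring. }
rewrite !fsum_add, fsum_scal_r, Hlam, fsum_polar_centered; [ring|].
intros i Hi. rewrite (fsum_ext _ _ (fun m => lam m * p m i - x i * lam m)) by (intros; ring).
rewrite fsum_sub, fsum_scal, Hlam, <- Hx by assumption. ring.
Qed.

Lemma in_convB_half_abs n z : (n <= 2 ^ kbits n)%nat -> in_convB n half_pt z ->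
  Rabs (z - bfun n half_pt) <= (sqrt (INR (2 ^ kbits n)) + 1) * INR n / 8.
Proof.
intros Hn (N & lam & p & Hlam0 & Hlam1 & Hp & Hx & ->).
set (M := (sqrt (INR (2 ^ kbits n)) + 1) * INR n / 8).
rewrite (fsum_convex_bfun n N lam p half_pt Hlam1 Hx).
replace (_ + _ - _) with (fsum N (fun m => lam m * bfun n (fun i => p m i - half_pt i))) by ring.
eapply Rle_trans; [apply fsum_abs_le|].
apply Rle_trans with (fsum N (fun m => lam m * M)); [|rewrite fsum_scal_r, Hlam1; lra].
apply fsum_le; intros m Hm. rewrite Rabs_mult, (Rabs_right (lam m)) by (apply Rle_ge; auto).
apply Rmult_le_compat_l; [auto|].
eapply Rle_trans; [apply bfun_abs_le, Hn|].
assert (Hsq : fsum n (fun i => (p m i - half_pt i) ^ 2) <= INR n / 4).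
{ replace (INR n / 4) with (fsum n (fun _ => / 4)) by (rewrite fsum_const; lra).
  apply fsum_le; intros i Hi. destruct (Hp m Hm i Hi). unfold half_pt. nra. }
pose proof (sqrt_pos (INR (2 ^ kbits n))).
unfold M. apply Rle_trans with ((sqrt (INR (2 ^ kbits n)) + 1) / 2 * (INR n / 4)); [|right; field].
apply Rmult_le_compat_l; lra.
Qed.

(* The McCormick point [y_ij = 1/2] where [a_ij = s] and [y_ij = 0] otherwise. *)
Lemma in_Q_half_sign n s : s = 1 \/ s = -1 ->
  in_Q n half_pt (fsum n (fun j => fsum j (fun i => (coef n i j + s) / 4))).
Proof.
intros Hs. split; [intros i _; unfold half_pt; lra|].
exists (fun i j => (1 + s * coef n i j) / 4). split.
- split; [intros i _; unfold half_pt; lra|].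
  intros i j _ _. unfold half_pt.
  destruct (pow_m1_cases (inner (kbits n) i j)) as [H | H]; unfold coef; rewrite H;
  destruct Hs as [-> | ->]; lra.
- apply fsum_ext; intros j _; apply fsum_ext; intros i _.
  unfold coef; destruct (pow_m1_cases (inner (kbits n) i j)) as [-> | ->]; field.
Qed.

Lemma fsum_sign_gap n :
  fsum n (fun j => fsum j (fun i => (coef n i j + 1) / 4))
  - fsum n (fun j => fsum j (fun i => (coef n i j + -1) / 4)) = INR n * (INR n - 1) / 4.
Proof.
rewrite <- fsum_sub, (fsum_ext _ _ (fun j => INR j * / 2)), fsum_scal_r, fsum_id; [field|].
intros j _. rewrite <- fsum_sub, <- fsum_const. apply fsum_ext; intros; field.
Qed.

Lemma pow2_kbits_bounds n : (2 <= n)%nat -> (n <= 2 ^ kbits n <= 2 * n)%nat.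
Proof.
intros Hn. unfold kbits. destruct (Nat.log2_up_spec n) as [Hlo Hhi]; [lia|].
pose proof (Nat.log2_up_pos n ltac:(lia)).
split; [assumption|]. destruct (Nat.log2_up n) as [|k]; [lia|]. simpl in *; lia.
Qed.

Lemma sqrt_mul_sqrt_add1_le N K : 18 <= N -> 0 <= K <= 2 * N ->
  sqrt N * (sqrt K + 1) <= 3 * (N - 1).
Proof.
intros HN HK. pose proof (sqrt_pos N). pose proof (sqrt_pos K).
set (r := sqrt N) in *. set (s := sqrt K) in *.
assert (Hr : r * r = N) by (apply sqrt_sqrt; lra).
assert (Hs : s * s = K) by (apply sqrt_sqrt; lra).
assert (r4 : 4 <= r) by nra.
(* [r s <= r^2 + s^2 / 4 <= 3 N / 2] *)
pose proof (pow2_ge_0 (r - s / 2)). nra.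
Qed.

Theorem mainTheorem7 (n : nat) (hn : (18 <= n)%nat) :
  mcgap_ge_c_chgap n half_pt (sqrt (INR n) / 3).
Proof.
intros z1 z2 Hz1 Hz2.
destruct (pow2_kbits_bounds n) as [HK1 HK2]; [lia|].
pose proof (in_convB_half_abs n z1 HK1 Hz1) as B1.
pose proof (in_convB_half_abs n z2 HK1 Hz2) as B2.
apply Rabs_le_bounds in B1, B2.
exists (fsum n (fun j => fsum j (fun i => (coef n i j + 1) / 4))),
       (fsum n (fun j => fsum j (fun i => (coef n i j + -1) / 4))).
split; [apply in_Q_half_sign; lra|].
split; [apply in_Q_half_sign; lra|].
rewrite fsum_sign_gap.
assert (HN : 18 <= INR n) by (replace 18 with (INR 18) by (simpl; lra); apply le_INR, hn).
assert (HK : INR (2 ^ kbits n) <= 2 * INR n)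
  by (replace 2 with (INR 2) by (simpl; lra); rewrite <- mult_INR; apply le_INR, HK2).
pose proof (sqrt_mul_sqrt_add1_le _ _ HN (conj (pos_INR _) HK)) as Hnum.
set (s := sqrt (INR (2 ^ kbits n))) in *. set (r := sqrt (INR n)) in *.
assert (0 <= r) by apply sqrt_pos.
assert (Hgap : z1 - z2 <= (s + 1) * INR n / 4) by lra.
apply Rle_ge. apply Rle_trans with (r / 3 * ((s + 1) * INR n / 4)).
- apply Rmult_le_compat_l; lra.
- nra.
Qed.
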